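(* Let $f:\mathbb{R}^n_{>0}\to\mathbb{R}^n_{>0}$ be order-preserving and homogeneous, and let $J$ be a nonempty proper subset of $[n]$. Then there exists $x\in\mathbb{R}^n_{>0}$ such that $$\max_{j\in J}\frac{f(x)_j}{x_j}<\min_{i\in[n]\setminus J}\frac{f(x)_i}{x_i}$$ if and only if $r(f^J_0)<\lambda(f^{[n]\setminus J}_\infty)$.
   Context: $[n]=\{1,\dots,n\}$; entrywise order. Order-preserving: $x\le y\Rightarrow f(x)\le f(y)$; homogeneous: $f(tx)=tf(x)$ for $t>0$. $f$ extends continuously to order-preserving homogeneous maps $\mathbb{R}^n_{\ge0}\to\mathbb{R}^n_{\ge0}$ and $(0,\infty]^n\to(0,\infty]^n$, again denoted $f$. $P^J_\alpha(x)_j=x_j$ for $j\in J$, $\alpha$ otherwise; $f^J_0=P^J_0fP^J_0$, $f^J_\infty=P^J_\infty fP^J_\infty$. For $g$ order-preserving homogeneous on $\mathbb{R}^n_{\ge0}$ or $(0,\infty]^n$: $r(g)=\inf_{x\in\mathbb{R}^n_{>0}}\max_ig(x)_i/x_i$, $\lambda(g)=\sup_{x\in\mathbb{R}^n_{>0}}\min_ig(x)_i/x_i$ (values in $[0,\infty]$). *)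

From HB Require Import structures.
From mathcomp Require Import all_boot all_order all_algebra.
From mathcomp Require Import all_classical all_reals ereal.
Set Implicit Arguments. Unset Strict Implicit. Unset Printing Implicit Defensive.
Import Order.TTheory GRing.Theory Num.Theory.
Local Open Scope ring_scope.
Local Open Scope classical_set_scope.

Section Defs.
Variables (R : realType) (n : nat).

Definition pos (x : 'I_n -> R) := forall i, 0 < x i.
Definition nonneg (x : 'I_n -> R) := forall i, 0 <= x i.
Definition vle (x y : 'I_n -> R) := forall i, x i <= y i.

(* f : R^n_{>0} -> R^n_{>0} order-preserving and homogeneous
   (f is a total function, only its values on R^n_{>0} matter) *)
Definition maps_pos (f : ('I_n -> R) -> ('I_n -> R)) :=
  forall x, pos x -> pos (f x).
Definition order_preserving (f : ('I_n -> R) -> ('I_n -> R)) :=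
  forall x y, pos x -> pos y -> vle x y -> vle (f x) (f y).
Definition homogeneous (f : ('I_n -> R) -> ('I_n -> R)) :=
  forall (t : R) x, 0 < t -> pos x -> f (fun i => t * x i) = (fun i => t * f x i).

(* continuous extension of f to R^n_{>=0}:
   f(x)_i = inf { f(y)_i : y in R^n_{>0}, x <= y }  (= lim_{t->0+} f(x + t 1)_i) *)
Definition ext0 (f : ('I_n -> R) -> ('I_n -> R)) (x : 'I_n -> R) (i : 'I_n)
  : \bar R :=
  ereal_inf [set ((f y) i)%:E | y in [set y | pos y /\ vle x y]].

(* continuous extension of f to (0,oo]^n:
   f(x)_i = sup { f(y)_i : y in R^n_{>0}, y <= x } *)
Definition extinf (f : ('I_n -> R) -> ('I_n -> R)) (x : 'I_n -> \bar R)
  (i : 'I_n) : \bar R :=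
  ereal_sup [set ((f y) i)%:E |
               y in [set y | pos y /\ forall j, ((y j)%:E <= x j)%E]].

Definition P0 (J : {set 'I_n}) (x : 'I_n -> R) : 'I_n -> R :=
  fun i => if i \in J then x i else 0.
Definition P0e (J : {set 'I_n}) (x : 'I_n -> \bar R) : 'I_n -> \bar R :=
  fun i => if i \in J then x i else 0%E.
Definition Pinfe (J : {set 'I_n}) (x : 'I_n -> \bar R) : 'I_n -> \bar R :=
  fun i => if i \in J then x i else +oo%E.

(* f^J_0 = P^J_0 f P^J_0 and f^J_oo = P^J_oo f P^J_oo, evaluated on R^n_{>0}
   (the only points where r and lambda need them) *)
Definition fJ0 f (J : {set 'I_n}) (x : 'I_n -> R) : 'I_n -> \bar R :=
  P0e J (ext0 f (P0 J x)).
Definition fJinf f (J : {set 'I_n}) (x : 'I_n -> R) : 'I_n -> \bar R :=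
  Pinfe J (extinf f (Pinfe J (fun i => (x i)%:E))).

Definition eratio (g : ('I_n -> R) -> ('I_n -> \bar R)) x i : \bar R :=
  (g x i * ((x i)^-1)%:E)%E.

Definition rr (g : ('I_n -> R) -> ('I_n -> \bar R)) : \bar R :=
  ereal_inf [set (\big[maxe/-oo%E]_(i : 'I_n) eratio g x i) | x in pos].
Definition lam (g : ('I_n -> R) -> ('I_n -> \bar R)) : \bar R :=
  ereal_sup [set (\big[mine/+oo%E]_(i : 'I_n) eratio g x i) | x in pos].

End Defs.

From HB Require Import structures.
From mathcomp Require Import all_boot all_order all_algebra.
From mathcomp Require Import all_classical all_reals ereal.
From mathcomp Require Import lra.
Set Implicit Arguments.
Unset Strict Implicit.
Unset Printing Implicit Defensive.
Import Order.TTheory GRing.Theory Num.Theory.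
Local Open Scope ring_scope.

(* For x > 0, f^J_0(x) <= f(x) on J and f^{[n]\J}_oo(x) >= f(x) off J, which
   gives the forward implication.  Conversely, pick c strictly between
   r(f^J_0) and lambda(f^{[n]\J}_oo), and u, v > 0 with f^J_0(u) < c u on J and
   f^{[n]\J}_oo(v) > c v off J.  By the definition of the two extensions these
   strict inequalities are witnessed by finitely many vectors y_j >= P^J_0 u
   and z_i <= P^{[n]\J}_oo v in R^n_{>0}.  For small e > 0 the vector x_e equal
   to u on J and to e v off J lies below every y_j, while x_e / e lies above
   every z_i; monotonicity and homogeneity then give f(x_e) < c x_e on J and
   f(x_e) > c x_e off J. *)

Lemma lte_dense_EFin (R : realFieldType) (a b : \bar R) :
  (a < b)%E -> exists2 c : R, (a < c%:E)%E & (c%:E < b)%E.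
Proof.
case: a => [a| |]; case: b => [b| |] //= ab.
- exists ((a + b) / 2); rewrite !lte_fin; rewrite lte_fin in ab; lra.
- by exists (a + 1); rewrite ?ltry // lte_fin; lra.
- by exists (b - 1); rewrite ?ltNyr // lte_fin; lra.
- by exists 0; rewrite ?ltNyr ?ltry.
Qed.

Lemma small_enough_forall (R : realDomainType) (I : finType)
    (P : I -> R -> Prop) :
  (forall i, exists2 e, 0 < e & forall d, 0 < d -> d <= e -> P i d) ->
  exists2 e, 0 < e & forall i, P i e.
Proof.
move=> small.
have /choice[e he] : forall i, exists e, 0 < e /\
    forall d, 0 < d -> d <= e -> P i d.
  by move=> i; have [e e_gt0 eP] := small i; exists e.
have min_gt0 : 0 < \big[Num.min/1]_i e i.
  by apply: lt_bigmin => // i _; case: (he i).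
exists (\big[Num.min/1]_i e i) => // i.
by apply: (he i).2 => //; exact: bigmin_le.
Qed.

Section Extensions.
Variables (R : realType) (n : nat) (f : ('I_n -> R) -> 'I_n -> R).
Local Open Scope ereal_scope.

Lemma ext0_le x y i : pos y -> vle x y -> ext0 f x i <= (f y i)%:E.
Proof. by move=> ypos xy; apply: ereal_inf_lbound; exists y. Qed.

Lemma ext0_lt x i (c : R) :
  ext0 f x i < c%:E -> exists2 y, pos y /\ vle x y & (f y i < c)%R.
Proof. by case/ereal_inf_lt => _ [y xy <-]; rewrite lte_fin; exists y. Qed.

Lemma extinf_ge x y i :
  pos y -> (forall j, (y j)%:E <= x j) -> (f y i)%:E <= extinf f x i.
Proof. by move=> ypos yx; apply: ereal_sup_ubound; exists y. Qed.

Lemma extinf_gt x i (c : R) :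
  c%:E < extinf f x i ->
  exists2 y, pos y /\ (forall j, (y j)%:E <= x j) & (c < f y i)%R.
Proof. by case/ereal_sup_gt => _ [y yx <-]; rewrite lte_fin; exists y. Qed.

End Extensions.

Section CollatzWielandt.
Variables (R : realType) (n : nat).
Implicit Types (g : ('I_n -> R) -> 'I_n -> \bar R) (x : 'I_n -> R).
Local Open Scope ereal_scope.

Lemma rr_le_max g x : pos x -> rr g <= \big[maxe/-oo]_i eratio g x i.
Proof. by move=> xpos; apply: ereal_inf_lbound; exists x. Qed.

Lemma min_le_lam g x : pos x -> \big[mine/+oo]_i eratio g x i <= lam g.
Proof. by move=> xpos; apply: ereal_sup_ubound; exists x. Qed.

Lemma rr_lt g (c : R) :
  rr g < c%:E -> exists2 x, pos x & forall i, eratio g x i < c%:E.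
Proof.
case/ereal_inf_lt => _ [x xpos <-] lt; exists x => // i.
exact: le_lt_trans (le_bigmax _ _ i) lt.
Qed.

Lemma lam_gt g (c : R) :
  c%:E < lam g -> exists2 x, pos x & forall i, c%:E < eratio g x i.
Proof.
case/ereal_sup_gt => _ [x xpos <-] gt; exists x => // i.
exact: lt_le_trans gt (bigmin_le _ i _).
Qed.

End CollatzWielandt.

Section Restrictions.
Variables (R : realType) (n : nat) (f : ('I_n -> R) -> 'I_n -> R).
Variable J : {set 'I_n}.
Local Open Scope ereal_scope.

Lemma rr_fJ0_le_max x :
  maps_pos f -> J != finset.set0 -> pos x ->
  rr (fJ0 f J) <= \big[maxe/-oo]_(j in J) (f x j / x j)%:E.
Proof.
move=> fpos /set0Pn[j0 j0J] xpos.
apply: le_trans (rr_le_max _ xpos) _.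
apply: bigmax_le => [|i _]; first exact: leNye.
rewrite /eratio /fJ0 /P0e; case: ifP => iJ.
- apply: le_trans (le_bigmax_cond _ _ iJ); rewrite EFinM.
  apply: lee_wpmul2r; first by rewrite lee_fin invr_ge0 ltW.
  by apply: ext0_le => // k; rewrite /P0; case: ifP => // _; exact/ltW.
- rewrite mul0e; apply: le_trans (le_bigmax_cond _ _ j0J).
  by rewrite lee_fin; apply: divr_ge0; apply: ltW; [exact: fpos | exact: xpos].
Qed.

Lemma min_le_lam_fJinf x :
  pos x -> \big[mine/+oo]_(i in ~: J) (f x i / x i)%:E <= lam (fJinf f (~: J)).
Proof.
move=> xpos; apply: le_trans (min_le_lam _ xpos); apply: le_bigmin => [|i _].
  exact: leey.
rewrite /eratio /fJinf /Pinfe; case: ifP => iK.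
- apply: le_trans (bigmin_le_cond _ _ iK) _; rewrite EFinM.
  apply: lee_wpmul2r; first by rewrite lee_fin invr_ge0 ltW.
  by apply: extinf_ge => // k; case: ifP => // _; exact: leey.
- by rewrite gt0_mulye ?leey // lte_fin invr_gt0.
Qed.

Lemma rr_fJ0_lt (c : R) :
  rr (fJ0 f J) < c%:E ->
  exists2 u, pos u & forall j, j \in J ->
    exists2 y, pos y /\ vle (P0 J u) y & (f y j < c * u j)%R.
Proof.
case/rr_lt => u upos lt; exists u => // j jJ; apply: ext0_lt.
by have := lt j; rewrite /eratio /fJ0 /P0e jJ lte_pdivrMr // -EFinM.
Qed.

Lemma lam_fJinf_gt (c : R) :
  c%:E < lam (fJinf f (~: J)) ->
  exists2 v, pos v & forall i, i \notin J ->
    exists2 z, pos z /\ (forall k, k \notin J -> (z k <= v k)%R)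
             & (c * v i < f z i)%R.
Proof.
case/lam_gt => v vpos gt; exists v => // i iJ.
have iK : i \in ~: J by rewrite inE.
have := gt i; rewrite /eratio /fJinf /Pinfe iK lte_pdivlMr // -EFinM.
case/extinf_gt => z [zpos zv] lt; exists z => //; split => // k kJ.
by have := zv k; rewrite /Pinfe inE kJ lee_fin.
Qed.

End Restrictions.

Section Patching.
Variables (R : realType) (n : nat) (f : ('I_n -> R) -> 'I_n -> R).
Hypotheses (fmon : order_preserving f) (fhom : homogeneous f).
Variables (J : {set 'I_n}) (c : R) (u v : 'I_n -> R).
Hypotheses (upos : pos u) (vpos : pos v).

Definition patch (e : R) : 'I_n -> R :=
  fun k => if k \in J then u k else e * v k.

Lemma patch_pos e : 0 < e -> pos (patch e).
Proof.
move=> e_gt0 k; rewrite /patch.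
by case: ifP => _; [exact: upos | exact: mulr_gt0].
Qed.

Lemma patch_lt j :
  j \in J -> (exists2 y, pos y /\ vle (P0 J u) y & f y j < c * u j) ->
  exists2 e, 0 < e & forall d, 0 < d -> d <= e -> f (patch d) j < c * patch d j.
Proof.
move=> jJ [y [ypos uy] lt].
have [e e_gt0 ev_le_y] : exists2 e, 0 < e & forall k, e * v k <= y k.
  apply: small_enough_forall => k; exists (y k / v k); first exact: divr_gt0.
  by move=> d _; rewrite ler_pdivlMr.
exists e => // d d_gt0 de.
have patch_le_y : vle (patch d) y.
  move=> k; rewrite /patch; case: ifPn => kJ.
    by have := uy k; rewrite /P0 kJ.
  by apply: le_trans (ev_le_y k); rewrite ler_pM2r.
apply: le_lt_trans (fmon (patch_pos d_gt0) ypos patch_le_y j) _.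
by rewrite /patch jJ.
Qed.

Lemma patch_gt i :
  i \notin J ->
  (exists2 z, pos z /\ (forall k, k \notin J -> z k <= v k)
             & c * v i < f z i) ->
  exists2 e, 0 < e & forall d, 0 < d -> d <= e -> c * patch d i < f (patch d) i.
Proof.
move=> iJ [z [zpos zv] lt].
have [e e_gt0 ez_le_u] :
    exists2 e, 0 < e & forall k, k \in J -> e * z k <= u k.
  apply: small_enough_forall => k; exists (u k / z k); first exact: divr_gt0.
  by move=> d _; rewrite ler_pdivlMr.
exists e => // d d_gt0 de.
pose w k := patch d k / d.
have wpos : pos w by move=> k; apply: divr_gt0 => //; exact: patch_pos.
have patch_scale : patch d = (fun k => d * w k).
  by apply: funext => k; rewrite mulrC divfK ?gt_eqF.
have z_le_w : vle z w.
  move=> k; rewrite /w /patch; case: ifPn => kJ.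
    rewrite ler_pdivlMr // mulrC; apply: le_trans (ez_le_u k kJ).
    by rewrite ler_pM2r.
  by rewrite [d * _]mulrC mulfK ?gt_eqF //; exact: zv.
have -> : patch d i = d * v i by rewrite /patch (negbTE iJ).
rewrite patch_scale fhom //= mulrCA ltr_pM2l //.
exact: lt_le_trans lt (fmon zpos wpos z_le_w i).
Qed.

Lemma separating_point :
  (forall j, j \in J ->
    exists2 y, pos y /\ vle (P0 J u) y & f y j < c * u j) ->
  (forall i, i \notin J ->
    exists2 z, pos z /\ (forall k, k \notin J -> z k <= v k)
             & c * v i < f z i) ->
  exists2 x, pos x &
    forall k, if k \in J then f x k < c * x k else c * x k < f x k.
Proof.
move=> hy hz.
pose separates e k := if k \in J then f (patch e) k < c * patch e k
                      else c * patch e k < f (patch e) k.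
have [e e_gt0 sep] : exists2 e, 0 < e & forall k, separates e k.
  apply: (small_enough_forall (P := fun k e => separates e k)) => k.
  have [kJ|kJ] := boolP (k \in J).
  - by rewrite /separates kJ; exact: patch_lt kJ (hy k kJ).
  - by rewrite /separates (negbTE kJ); exact: patch_gt kJ (hz k kJ).
by exists (patch e); [exact: patch_pos | exact: sep].
Qed.

End Patching.

Theorem lemma3p3 (R : realType) (n : nat) (f : ('I_n -> R) -> ('I_n -> R))
  (J : {set 'I_n})
  (hpos : maps_pos f) (hmon : order_preserving f) (hhom : homogeneous f)
  (hJ0 : J != finset.set0) (hJT : J != [set: 'I_n]) :
  (exists x : 'I_n -> R, pos x /\
     (\big[maxe/-oo%E]_(j in J) ((f x j / x j)%:E) <
      \big[mine/+oo%E]_(i in ~: J) ((f x i / x i)%:E))%E)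
  <-> (rr (fun x => fJ0 f J x) < lam (fun x => fJinf f (~: J) x))%E.
Proof.
split => [[x [xpos sep]] | rr_lt_lam].
  apply: le_lt_trans (rr_fJ0_le_max hpos hJ0 xpos) _.
  exact: lt_le_trans sep (min_le_lam_fJinf _ _ xpos).
have [c rr_lt_c c_lt_lam] := lte_dense_EFin rr_lt_lam.
have [u upos hy] := rr_fJ0_lt rr_lt_c.
have [v vpos hz] := lam_fJinf_gt c_lt_lam.
have [x xpos sep] := separating_point hmon hhom upos vpos hy hz.
exists x; split => //; apply: (@lt_trans _ _ c%:E).
- apply: bigmax_lt => [|j jJ]; first exact: ltNyr.
  by have := sep j; rewrite jJ lte_fin ltr_pdivrMr.
- apply: lt_bigmin => [|i iK]; first exact: ltry.
  by move: iK (sep i); rewrite inE => /negbTE ->; rewrite lte_fin ltr_pdivlMr.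
Qed.
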